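(* Let $\gamma\in PSL(n+1,\mathbb{C})$ be a projective transformation of $\mathbb{P}^n_{\mathbb{C}}$. Then: (1) $\gamma$ is loxodromic if and only if there are two distinct points $x,y\in \mathrm{Fix}(\gamma)$ such that the action of $\gamma$ restricted to the complex projective line $\langle\langle x,y\rangle\rangle$ is loxodromic. (2) $\gamma$ is parabolic if and only if every lift $\widetilde\gamma\in SL(n+1,\mathbb{C})$ of $\gamma$ is non-diagonalizable and for every couple of distinct points $x,y\in \mathrm{Fix}(\gamma)$ the action of $\gamma$ restricted to the complex projective line $\langle\langle x,y\rangle\rangle$ is elliptic. (3) $\gamma$ is elliptic if and only if every lift $\widetilde\gamma\in SL(n+1,\mathbb{C})$ of $\gamma$ is diagonalizable and for every couple of distinct points $x,y\in \mathrm{Fix}(\gamma)$ the action of $\gamma$ restricted to the complex projective line $\langle\langle x,y\rangle\rangle$ is elliptic.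
   Context: $PSL(n+1,\mathbb{C})$ acts on $\mathbb{P}^n_{\mathbb{C}}=(\mathbb{C}^{n+1}\setminus\{0\})/\mathbb{C}^*$; a lift of $\gamma$ is a matrix $\widetilde\gamma\in SL(n+1,\mathbb{C})$ projecting to $\gamma$. $\mathrm{Fix}(\gamma)$ denotes the set of fixed points of $\gamma$ in $\mathbb{P}^n_{\mathbb{C}}$, and for a set of points $P$, $\langle\langle P\rangle\rangle$ is the smallest projective subspace containing $P$ (so for distinct $x,y$ it is the projective line through them). The classification used: $\gamma$ is elliptic if every lift $\widetilde\gamma$ is diagonalizable with all eigenvalues of modulus one; $\gamma$ is loxodromic if every lift $\widetilde\gamma$ has an eigenvalue of modulus different from one; $\gamma$ is parabolic if every lift $\widetilde\gamma$ has only eigenvalues of modulus one and is non-diagonalizable. The same classification applies to the restriction of $\gamma$ to an invariant projective line (an element of $PSL(2,\mathbb{C})$). *)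

From HB Require Import structures.
From mathcomp Require Import all_boot all_order all_algebra.
From mathcomp Require Import complex.
From mathcomp Require Import reals.
Set Implicit Arguments. Unset Strict Implicit. Unset Printing Implicit Defensive.
Import Order.TTheory GRing.Theory Num.Theory.
Local Open Scope ring_scope.

(* A projective transformation of P^(k-1) is represented by an invertible
   matrix g : 'M[R[i]]_k acting on column vectors (x |-> g *m x). *)

Section Classification.
Variable R : realType.
Local Notation C := R[i].

(* h is a lift in SL(k,C) of the projective class of g *)
Definition is_lift (k : nat) (g h : 'M[C]_k) : Prop :=
  \det h = 1 /\ exists c : C, c != 0 /\ h = c *: g.

Definition elliptic (k : nat) (g : 'M[C]_k) : Prop :=
  forall h, is_lift g h ->
    diagonalizable h /\ (forall a : C, eigenvalue h a -> `|a| = 1).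

Definition loxodromic (k : nat) (g : 'M[C]_k) : Prop :=
  forall h, is_lift g h -> exists a : C, eigenvalue h a /\ `|a| != 1.

Definition parabolic (k : nat) (g : 'M[C]_k) : Prop :=
  forall h, is_lift g h ->
    (forall a : C, eigenvalue h a -> `|a| = 1) /\ ~ diagonalizable h.

(* x (a nonzero column vector) represents a fixed point of g in P^(k-1) *)
Definition fixed_point (k : nat) (g : 'M[C]_k) (x : 'cV[C]_k) : Prop :=
  x != 0 /\ exists a : C, g *m x = a *: x.

Definition distinct_points (k : nat) (x y : 'cV[C]_k) : Prop :=
  ~ (exists c : C, c != 0 /\ y = c *: x).

(* M : 'M_2 is a matrix of the restriction of g to the projective line
   <<x,y>>, written in a basis (columns of B) of the 2-dimensional
   subspace spanned by x and y. *)
Definition restriction_on_line (k : nat) (g : 'M[C]_k) (x y : 'cV[C]_k)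
    (M : 'M[C]_2) : Prop :=
  exists P : 'M[C]_2, P \in unitmx /\
    let B : 'M[C]_(k, 2) := row_mx x y *m P in g *m B = B *m M.

Definition restr_loxodromic (k : nat) (g : 'M[C]_k) (x y : 'cV[C]_k) : Prop :=
  exists M : 'M[C]_2, restriction_on_line g x y M /\ loxodromic M.

Definition restr_elliptic (k : nat) (g : 'M[C]_k) (x y : 'cV[C]_k) : Prop :=
  exists M : 'M[C]_2, restriction_on_line g x y M /\ elliptic M.

End Classification.

From HB Require Import structures.
From mathcomp Require Import all_boot all_order all_algebra.
From mathcomp Require Import complex.
From mathcomp Require Import reals.
From Stdlib Require Import Classical.
Set Implicit Arguments. Unset Strict Implicit. Unset Printing Implicit Defensive.
Import Order.TTheory GRing.Theory Num.Theory.
Local Open Scope ring_scope.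

(* Everything is read off the spectrum of g. As det g = 1, the lifts of g are
   the c g with |c| = 1, so g is loxodromic iff some eigenvalue of g has
   modulus other than 1; since the eigenvalues multiply to 1, this happens
   iff two eigenvalues have different moduli. Fixed points are eigenvectors,
   and on the line through eigenvectors x, y (distinct points) with
   eigenvalues a, b the restriction of g is conjugate to diag(a, b). A lift
   c diag(a, b) has c^2 a b = 1, hence unimodular eigenvalues iff |a| = |b|:
   the restriction is elliptic iff |a| = |b| and loxodromic otherwise.
   Ellipticity and parabolicity of g both amount to a unimodular spectrum
   and are told apart by the diagonalizability of the lifts. *)

Section EigenvalueTheory.
Variable F : fieldType.

Lemma eigenvalue_colP k (A : 'M[F]_k) a :
  reflect (exists2 x : 'cV_k, A *m x = a *: x & x != 0) (eigenvalue A a).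
Proof.
have -> : eigenvalue A a = eigenvalue A^T a.
  by rewrite /eigenvalue /eigenspace !kermx_eq0 !row_free_unit
       -unitmx_tr linearB /= tr_scalar_mx.
apply: (iffP eigenvalueP) => -[x Ax x0]; exists x^T; rewrite ?trmx_eq0 //.
  by rewrite -[A]trmxK -trmx_mul Ax linearZ.
by rewrite -trmx_mul Ax linearZ.
Qed.

Lemma eigenvalueZ k (A : 'M[F]_k) c a :
  c != 0 -> eigenvalue (c *: A) (c * a) = eigenvalue A a.
Proof.
move=> c0; apply/eigenvalueP/eigenvalueP => -[v Av v0]; exists v => //.
  by apply: (scalerI c0); rewrite scalerA -Av scalemxAr.
by rewrite -scalemxAr Av scalerA.
Qed.

Lemma eigenvalue_unitmx_neq0 k (A : 'M[F]_k) a :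
  A \in unitmx -> eigenvalue A a -> a != 0.
Proof.
move=> Au /eigenvalueP[v Av]; apply: contra_neq => a0.
by rewrite -(mulmxK Au v) Av a0 scale0r mul0mx.
Qed.

Lemma eigenvalue_simmx {k} (A B P : 'M[F]_k) :
  P \in unitmx -> A *m P = P *m B -> eigenvalue B =1 eigenvalue A.
Proof.
have sub (Q A' B' : 'M[F]_k) : Q \in unitmx -> A' *m Q = Q *m B' ->
    forall a, eigenvalue A' a -> eigenvalue B' a.
  move=> Qu AQ a /eigenvalueP[v Av v0]; apply/eigenvalueP; exists (v *m Q).
    by rewrite -mulmxA -AQ mulmxA Av scalemxAl.
  by apply: contraNneq v0 => vQ0; rewrite -(mulmxK Qu v) vQ0 mul0mx.
move=> Pu AP a; apply/idP/idP; last exact: sub Pu AP a.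
apply: (sub (invmx P)); rewrite ?unitmx_inv //.
by rewrite -[B](mulKmx Pu) -AP -mulmxA mulmxK.
Qed.

Lemma det_simmx {k} (A B P : 'M[F]_k) :
  P \in unitmx -> A *m P = P *m B -> \det B = \det A.
Proof.
move=> Pu; have dP0 : \det P != 0 by rewrite -unitfE -unitmxE.
by move=> /(congr1 determinant); rewrite !det_mulmx mulrC => /(mulfI dP0).
Qed.

Lemma mulmx1C k (A : 'M[F]_k) : A *m 1%:M = 1%:M *m A.
Proof. by rewrite mulmx1 mul1mx. Qed.

Definition diag2 (a b : F) : 'M[F]_2 :=
  diag_mx (\row_(i < 2) if i == 0 :> nat then a else b).

Lemma eigenvalue_diag2 a b z : eigenvalue (diag2 a b) z = (z == a) || (z == b).
Proof.
rewrite eigenvalue_root_char char_poly_trig ?diag_mx_is_trig //.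
by rewrite !big_ord_recl big_ord0 mulr1 rootM !root_XsubC !mxE /= !mulr1n.
Qed.

Lemma det_diag2 a b : \det (diag2 a b) = a * b.
Proof. by rewrite det_diag !big_ord_recl big_ord0 !mxE /= mulr1. Qed.

Lemma scale_diag2 c a b : c *: diag2 a b = diag2 (c * a) (c * b).
Proof.
by apply/matrixP => i j; rewrite !mxE; case: (i == j); rewrite ?mulr0 //;
   case: (i : nat) => [|?] /=; rewrite ?mulr1n.
Qed.

Lemma mul_row_mx_col2 k (x y : 'cV[F]_k) (w : 'cV[F]_2) :
  row_mx x y *m w = w 0 0 *: x + w 1 0 *: y.
Proof.
rewrite -{1}[w](@vsubmxK _ 1 1 1) mul_row_col.
rewrite [usubmx _]mx11_scalar [dsubmx _]mx11_scalar !mul_mx_scalar !mxE /=.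
by congr (w _ _ *: _ + w _ _ *: _); apply: val_inj.
Qed.

Lemma mul_row_mx_eigen k (g : 'M[F]_k) (x y : 'cV[F]_k) a b :
  g *m x = a *: x -> g *m y = b *: y ->
  g *m row_mx x y = row_mx x y *m diag2 a b.
Proof.
move=> gx gy; rewrite mul_mx_row gx gy mul_mx_diag; apply/matrixP => i j.
by rewrite !mxE; case: splitP => j' ->; rewrite !mxE mulrC; case: j' => [[]].
Qed.

End EigenvalueTheory.

Definition unimodular_spectrum (C : numFieldType) k (A : 'M[C]_k) :=
  forall a, eigenvalue A a -> `|a| = 1.

Lemma norm_det_const_spectrum (C : numClosedFieldType) k (A : 'M[C]_k) r :
  (forall a, eigenvalue A a -> `|a| = r) -> `|\det A| = r ^+ k.
Proof.
move=> Ar; have [s charA] := closed_field_poly_normal (char_poly A).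
rewrite (monicP (char_poly_monic A)) scale1r in charA.
have size_s : size s = k.
  by move: (size_char_poly A); rewrite charA size_prod_XsubC => -[].
have := char_poly_det A; rewrite charA coef0_prod_XsubC size_s.
move=> /(congr1 (fun x => `|(-1) ^+ k * x|)); rewrite !normrM normrX normrN1.
rewrite expr1n !mul1r => <-; rewrite normr_prod big_seq (eq_bigr (fun=> r)).
  by rewrite -big_seq big_const_seq count_predT size_s -Monoid.iteropE.
by move=> a sa; apply: Ar; rewrite eigenvalue_root_char charA root_prod_XsubC.
Qed.

Section Lifts.
Variable R : realType.
Local Notation C := R[i].

Lemma mul_eq1_norm_eq (u v : C) : u * v = 1 -> (`|u| == `|v|) = (`|u| == 1).
Proof.
move=> /(congr1 Num.norm); rewrite normrM normr1 => uv1.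
apply/eqP/eqP => [uv | u1]; last by move: uv1; rewrite u1 mul1r.
by apply/eqP; rewrite -(pexpr_eq1 (n := 2)) // expr2 {2}uv uv1.
Qed.

Lemma norm_scale_eq (c u v : C) :
  c != 0 -> (`|c * u| == `|c * v|) = (`|u| == `|v|).
Proof. by move=> c0; rewrite !normrM (inj_eq (mulfI _)) ?normr_eq0. Qed.

Lemma exists_lift k (A : 'M[C]_k.+1) : \det A != 0 -> exists h, is_lift A h.
Proof.
move=> dA0; set c := k.+1.-root (\det A)^-1.
have ck : c ^+ k.+1 = (\det A)^-1 by rewrite rootCK.
have c0 : c != 0.
  by apply: contraTneq (invr_neq0 dA0) => c0; rewrite -ck c0 expr0n negbK.
exists (c *: A); split; last by exists c.
by rewrite detZ ck mulVf.
Qed.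

Lemma is_lift_det1 k (g : 'M[C]_k.+1) h :
  \det g = 1 -> is_lift g h -> exists2 c : C, `|c| = 1 & h = c *: g.
Proof.
move=> dg [dh [c [c0 hc]]]; exists c => //.
move: dh; rewrite hc detZ dg mulr1 => ck1.
by apply/eqP; rewrite -(pexpr_eq1 (n := k.+1)) // -normrX ck1 normr1.
Qed.

Lemma loxodromic_not_unimodular k (M : 'M[C]_k) :
  loxodromic M <-> forall h, is_lift M h -> ~ unimodular_spectrum h.
Proof.
split=> [lox h /lox[a [ha a1]] unit_h | not_unit h /not_unit not_unit_h].
  by move/eqP: a1; apply; apply: unit_h.
apply: NNPP => no_a; apply: not_unit_h => a ha.
by have [//|a1] := eqVneq `|a| 1; exfalso; apply: no_a; exists a.
Qed.

Section SimilarToDiag2.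
Variables (M P : 'M[C]_2) (a b : C).
Hypotheses (Pu : P \in unitmx) (DPM : diag2 a b *m P = P *m M).

Lemma det_simmx_diag2 : \det M = a * b.
Proof. by rewrite (det_simmx Pu DPM) det_diag2. Qed.

Lemma is_lift_simmx_diag2 h : is_lift M h ->
  exists c : C, [/\ c != 0, (c * a) * (c * b) = 1, h = c *: M
    & forall w, eigenvalue h (c * w) = (w == a) || (w == b)].
Proof.
move=> [dh [c [c0 hM]]]; exists c; split=> // [|w].
  by rewrite mulrACA -det_simmx_diag2 -expr2 -detZ -hM.
by rewrite hM eigenvalueZ // (eigenvalue_simmx Pu DPM) eigenvalue_diag2.
Qed.

Lemma unimodular_lift_simmx_diag2 h :
  is_lift M h -> unimodular_spectrum h <-> `|a| = `|b|.
Proof.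
move=> /is_lift_simmx_diag2[c [c0 prod1 _ eig_h]]; split=> [unit_h | ab z].
  by apply/eqP; rewrite -(norm_scale_eq _ _ c0) !unit_h ?eig_h ?eqxx ?orbT.
have unit_ca : `|c * a| = 1.
  by apply/eqP; rewrite -(mul_eq1_norm_eq prod1) norm_scale_eq // ab.
rewrite -(mulVKf c0 z) eig_h => /orP[] /eqP-> //.
by apply/eqP; rewrite -unit_ca eq_sym norm_scale_eq // ab.
Qed.

Lemma elliptic_simmx_diag2 : a * b != 0 -> elliptic M <-> `|a| = `|b|.
Proof.
rewrite -det_simmx_diag2 => /exists_lift[h0 h0M].
split=> [/(_ h0 h0M)[_ unit_h0] | ab h hM].
  exact/(unimodular_lift_simmx_diag2 h0M).
split; last exact/(unimodular_lift_simmx_diag2 hM).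
have [c [_ _ -> _]] := is_lift_simmx_diag2 hM.
exists P; rewrite // /similar_to conjumx // -scalemxAr -scalemxAl -DPM.
by rewrite mulmxK // scale_diag2 diag_mx_is_diag.
Qed.

Lemma loxodromic_simmx_diag2 : a * b != 0 -> loxodromic M <-> `|a| != `|b|.
Proof.
rewrite -det_simmx_diag2 => /exists_lift[h0 h0M].
apply: iff_trans (loxodromic_not_unimodular M) _.
split=> [/(_ h0 h0M) not_unit | ab h hM /(unimodular_lift_simmx_diag2 hM)].
  by apply/eqP => ab; apply/not_unit/(unimodular_lift_simmx_diag2 h0M).
exact/eqP.
Qed.

End SimilarToDiag2.
End Lifts.

Section FixedPoints.
Variables (R : realType) (k : nat) (g : 'M[R[i]]_k).

Lemma eigenvalue_fixed_point a :
  eigenvalue g a -> exists x, fixed_point g x /\ g *m x = a *: x.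
Proof.
by move=> /eigenvalue_colP[x gx x0]; exists x; split=> //; split=> //; exists a.
Qed.

Lemma fixed_point_eigenvalue x :
  fixed_point g x -> exists2 a, eigenvalue g a & g *m x = a *: x.
Proof.
by move=> [x0 [a gx]]; exists a => //; apply/eigenvalue_colP; exists x.
Qed.

Lemma same_point_eigenvalue_eq x y a b : x != 0 ->
  g *m x = a *: x -> g *m y = b *: y -> ~ distinct_points x y -> a = b.
Proof.
move=> x0 gx gy /NNPP[c [c0 yx]]; move: gy.
rewrite yx -scalemxAr gx !scalerA => /eqP; rewrite -subr_eq0 -scalerBl.
by rewrite scaler_eq0 (negbTE x0) orbF subr_eq0 mulrC => /eqP; apply: mulIf.
Qed.

Variables (x y : 'cV[R[i]]_k).
Hypotheses (x0 : x != 0) (y0 : y != 0) (xy : distinct_points x y).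

Lemma distinct_points_lin_indep u v : u *: x + v *: y = 0 -> u = 0 /\ v = 0.
Proof.
move=> uvxy; suff v0 : v = 0.
  move: uvxy; rewrite v0 scale0r addr0 => /eqP.
  by rewrite scaler_eq0 (negbTE x0) orbF => /eqP.
apply/eqP; apply: contraT => v0; case: xy; exists (- (u / v)); split.
  apply: contra_neq y0 => /eqP; rewrite oppr_eq0 mulf_eq0 invr_eq0 (negbTE v0).
  rewrite orbF => /eqP u0; apply: (scalerI v0).
  by move: uvxy; rewrite u0 scale0r add0r scaler0.
apply: (scalerI v0); rewrite scalerA mulrN mulrCA divff // mulr1 scaleNr.
by apply/eqP; rewrite eq_sym eqr_oppLR -subr_eq0 opprK uvxy.
Qed.

Lemma row_mx_distinct_inj m : injective (mulmx (row_mx x y) : 'M_(2, m) -> _).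
Proof.
move=> N1 N2 /eqP; rewrite -subr_eq0 -mulmxBr => /eqP N0.
apply/eqP; rewrite -subr_eq0; apply/eqP/matrixP => i j.
have : row_mx x y *m col j (N1 - N2) = 0 by rewrite colE mulmxA N0 mul0mx.
rewrite mul_row_mx_col2 => /distinct_points_lin_indep[].
rewrite !mxE; case: i => -[|[|//]] ? /=; [move=> <- _ | move=> _ <-];
  by congr (N1 _ j - N2 _ j); apply: val_inj.
Qed.

Variables (a b : R[i]).
Hypotheses (gx : g *m x = a *: x) (gy : g *m y = b *: y).

Lemma restriction_on_line_diag2 : restriction_on_line g x y (diag2 a b).
Proof.
by exists 1; split; rewrite ?unitmx1 //= mulmx1 (mul_row_mx_eigen gx gy).
Qed.

Lemma restriction_on_line_simmx M : restriction_on_line g x y M ->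
  exists2 P, P \in unitmx & diag2 a b *m P = P *m M.
Proof.
move=> [P [Pu /= gBM]]; exists P => //; apply: row_mx_distinct_inj.
by rewrite !mulmxA -(mul_row_mx_eigen gx gy) -gBM mulmxA.
Qed.

Lemma restr_ellipticE : a * b != 0 -> restr_elliptic g x y <-> `|a| = `|b|.
Proof.
move=> ab0; split=> [[M [/restriction_on_line_simmx[P Pu DPM] ellM]] | ab].
  exact/(elliptic_simmx_diag2 Pu DPM ab0).
exists (diag2 a b); split; first exact: restriction_on_line_diag2.
exact/(elliptic_simmx_diag2 (unitmx1 _ _) (mulmx1C _) ab0).
Qed.

Lemma restr_loxodromicE :
  a * b != 0 -> restr_loxodromic g x y <-> `|a| != `|b|.
Proof.
move=> ab0; split=> [[M [/restriction_on_line_simmx[P Pu DPM] loxM]] | ab].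
  exact/(loxodromic_simmx_diag2 Pu DPM ab0).
exists (diag2 a b); split; first exact: restriction_on_line_diag2.
exact/(loxodromic_simmx_diag2 (unitmx1 _ _) (mulmx1C _) ab0).
Qed.

End FixedPoints.

Section SpecialLinear.
Variables (R : realType) (n : nat) (g : 'M[R[i]]_n.+1).
Hypothesis g1 : \det g = 1.

Lemma is_lift_refl : is_lift g g.
Proof. by split=> //; exists 1; rewrite oner_eq0 scale1r. Qed.

Lemma eigenvalue_det1_mul_neq0 a b :
  eigenvalue g a -> eigenvalue g b -> a * b != 0.
Proof.
have gu : g \in unitmx by rewrite unitmxE g1 unitr1.
by move=> /(eigenvalue_unitmx_neq0 gu) a0 /(eigenvalue_unitmx_neq0 gu) b0;
   apply: mulf_neq0.
Qed.

Lemma unimodular_spectrum_lift h :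
  is_lift g h -> unimodular_spectrum h <-> unimodular_spectrum g.
Proof.
move=> /(is_lift_det1 g1)[c c1 ->].
have c0 : c != 0 by rewrite -normr_eq0 c1 oner_eq0.
split=> unit z; last first.
  by rewrite -(mulVKf c0 z) eigenvalueZ // normrM c1 mul1r => /unit.
by rewrite -(eigenvalueZ _ _ c0) => /unit; rewrite normrM c1 mul1r.
Qed.

Lemma loxodromicE : loxodromic g <-> ~ unimodular_spectrum g.
Proof.
apply: iff_trans (loxodromic_not_unimodular g) _.
split=> [/(_ g is_lift_refl) // | not_unit h hl /(unimodular_spectrum_lift hl)].
exact: not_unit.
Qed.

Lemma ellipticE : elliptic g <->
  (forall h, is_lift g h -> diagonalizable h) /\ unimodular_spectrum g.
Proof.
split=> [ell_g | [diag_g unit_g] h hl].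
  by split=> [h /ell_g[] //|]; have [] := ell_g _ is_lift_refl.
by split; [apply: diag_g | apply/(unimodular_spectrum_lift hl)].
Qed.

Lemma parabolicE : parabolic g <->
  (forall h, is_lift g h -> ~ diagonalizable h) /\ unimodular_spectrum g.
Proof.
split=> [par_g | [diag_g unit_g] h hl].
  by split=> [h /par_g[] //|]; have [] := par_g _ is_lift_refl.
by split; [apply/(unimodular_spectrum_lift hl) | apply: diag_g].
Qed.

Lemma unimodular_spectrumE : unimodular_spectrum g <->
  forall a b, eigenvalue g a -> eigenvalue g b -> `|a| = `|b|.
Proof.
split=> [unit_g a b ga gb | equi a ga].
  by rewrite (unit_g a ga) (unit_g b gb).
have := norm_det_const_spectrum (fun b gb => equi b a gb ga).
by rewrite g1 normr1 => /esym/eqP; rewrite pexpr_eq1 // => /eqP.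
Qed.

Lemma unimodular_spectrum_restr_elliptic : unimodular_spectrum g <->
  forall x y, fixed_point g x -> fixed_point g y -> distinct_points x y ->
    restr_elliptic g x y.
Proof.
apply: iff_trans unimodular_spectrumE _.
split=> [equi x y fx fy xy | ell a b ga gb].
  have [a ga gx] := fixed_point_eigenvalue fx.
  have [b gb gy] := fixed_point_eigenvalue fy.
  apply/(restr_ellipticE fx.1 fy.1 xy gx gy (eigenvalue_det1_mul_neq0 ga gb)).
  exact: equi.
have [x [fx gx]] := eigenvalue_fixed_point ga.
have [y [fy gy]] := eigenvalue_fixed_point gb.
have [xy | not_xy] := classic (distinct_points x y).
  exact/(restr_ellipticE fx.1 fy.1 xy gx gy (eigenvalue_det1_mul_neq0 ga gb))/ell.
by rewrite (same_point_eigenvalue_eq fx.1 gx gy not_xy).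
Qed.

Lemma not_unimodular_spectrum_restr_loxodromic : ~ unimodular_spectrum g <->
  exists x y, [/\ fixed_point g x, fixed_point g y, distinct_points x y
    & restr_loxodromic g x y].
Proof.
split=> [not_unit | [x [y [fx fy xy]]]].
  have [a [b [ga gb ab]]] :
      exists a b, [/\ eigenvalue g a, eigenvalue g b & `|a| != `|b|].
    apply: NNPP => no_ab; apply: not_unit.
    apply/unimodular_spectrumE => a b ga gb.
    by have [//|ab] := eqVneq `|a| `|b|; exfalso; apply: no_ab; exists a, b.
  have [x [fx gx]] := eigenvalue_fixed_point ga.
  have [y [fy gy]] := eigenvalue_fixed_point gb.
  have xy : distinct_points x y.
    apply: NNPP => not_xy; move/eqP: ab; apply.
    by rewrite (same_point_eigenvalue_eq fx.1 gx gy not_xy).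
  exists x, y; split=> //.
  exact/(restr_loxodromicE fx.1 fy.1 xy gx gy (eigenvalue_det1_mul_neq0 ga gb)).
have [a ga gx] := fixed_point_eigenvalue fx.
have [b gb gy] := fixed_point_eigenvalue fy.
move=> /(restr_loxodromicE fx.1 fy.1 xy gx gy (eigenvalue_det1_mul_neq0 ga gb)).
by move=> ab /unimodular_spectrumE equi; move/eqP: ab; apply; apply: equi.
Qed.

End SpecialLinear.

Theorem mainTheorem5 (R : realType) (n : nat) (g : 'M[R[i]]_(n.+1))
    (hg : \det g = 1) :
  (loxodromic g <->
     exists x y : 'cV[R[i]]_(n.+1),
       [/\ fixed_point g x, fixed_point g y, distinct_points x y
         & restr_loxodromic g x y])
  /\
  (parabolic g <->
     (forall h, is_lift g h -> ~ diagonalizable h) /\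
     (forall x y : 'cV[R[i]]_(n.+1),
        fixed_point g x -> fixed_point g y -> distinct_points x y ->
        restr_elliptic g x y))
  /\
  (elliptic g <->
     (forall h, is_lift g h -> diagonalizable h) /\
     (forall x y : 'cV[R[i]]_(n.+1),
        fixed_point g x -> fixed_point g y -> distinct_points x y ->
        restr_elliptic g x y)).
Proof.
have restr_ell := and_iff_compat_l _ (unimodular_spectrum_restr_elliptic hg).
split; [|split].
- exact: iff_trans (loxodromicE hg) (not_unimodular_spectrum_restr_loxodromic hg).
- exact: iff_trans (parabolicE hg) (restr_ell _).
- exact: iff_trans (ellipticE hg) (restr_ell _).
Qed.
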